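(* Let $r\ge1$ and let $\tau$ be a permutation of $F^r$ with $\tau(\mathbf 0)=\mathbf 0$. The Steiner quadruple system $SQS_\tau$ is point transitive if and only if $\tau^{-1}\in\mathrm{GL}(r,2)\,\tau\,\mathrm{GL}(r,2)$, i.e. there are $A,B\in\mathrm{GL}(r,2)$ with $\tau^{-1}(x)=A\tau(Bx)$ for all $x\in F^r$.
   Context: $F=\mathrm{GF}(2)$, $\mathbf 0$ is the all-zero vector. The point set consists of the $2^{r+1}$ symbols $(\{a\},\emptyset)$ and $(\emptyset,\{a\})$, $a\in F^r$; a pair $(X,Y)$ with $X,Y\subseteq F^r$ denotes the set of points $\{(\{x\},\emptyset):x\in X\}\cup\{(\emptyset,\{y\}):y\in Y\}$. $SQS_\tau=Q_0\cup Q_1\cup Q_\tau$ where $Q_0=\{(\{a,b,c,d\},\emptyset): a,b,c,d\in F^r \text{ pairwise distinct}, a+b+c+d=\mathbf 0\}$, $Q_1=\{(\emptyset,\{a,b,c,d\}): a,b,c,d\in F^r \text{ pairwise distinct}, a+b+c+d=\mathbf 0\}$, $Q_\tau=\{(\{a,c\},\{b,d\}): a,b,c,d\in F^r, \tau(a+c)=b+d\neq\mathbf 0\}$. A Steiner quadruple system is point transitive if its automorphism group (permutations of points preserving the set of quadruples) acts transitively on its points. *)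

From mathcomp Require Import all_boot all_order all_algebra all_fingroup.
Set Implicit Arguments. Unset Strict Implicit. Unset Printing Implicit Defensive.
Import GRing.Theory.
Local Open Scope ring_scope.

Definition vec (r : nat) := 'cV['F_2]_r.

(* Points: inl a = ({a},emptyset), inr a = (emptyset,{a}) *)
Definition point (r : nat) := (vec r + vec r)%type.

Definition distinct4 (r : nat) (a b c d : vec r) : bool :=
  [&& a != b, a != c, a != d, b != c, b != d & c != d].

Definition Q0 (r : nat) : {set {set point r}} :=
  [set Q | [exists a : vec r, exists b : vec r, exists c : vec r, exists d : vec r,
     [&& distinct4 a b c d, a + b + c + d == 0 &
         Q == [set inl a; inl b; inl c; inl d]]]].

Definition Q1 (r : nat) : {set {set point r}} :=
  [set Q | [exists a : vec r, exists b : vec r, exists c : vec r, exists d : vec r,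
     [&& distinct4 a b c d, a + b + c + d == 0 &
         Q == [set inr a; inr b; inr c; inr d]]]].

Definition Qtau (r : nat) (tau : {perm vec r}) : {set {set point r}} :=
  [set Q | [exists a : vec r, exists b : vec r, exists c : vec r, exists d : vec r,
     [&& tau (a + c) == b + d, b + d != 0 &
         Q == [set inl a; inl c; inr b; inr d]]]].

Definition SQS (r : nat) (tau : {perm vec r}) : {set {set point r}} :=
  Q0 r :|: Q1 r :|: Qtau tau.

Definition is_automorphism (r : nat) (tau : {perm vec r}) (g : {perm point r}) : Prop :=
  forall Q : {set point r}, (g @: Q \in SQS tau) = (Q \in SQS tau).

Definition point_transitive (r : nat) (tau : {perm vec r}) : Prop :=
  forall x y : point r, exists g : {perm point r}, is_automorphism tau g /\ g x = y.

From mathcomp Require Import all_boot all_order all_algebra all_fingroup.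
Import GRing.Theory.
Local Open Scope ring_scope.
Set Implicit Arguments. Unset Strict Implicit. Unset Printing Implicit Defensive.

(* Any three distinct points of SQS_tau lie in exactly one block, whose fourth point is an
   explicit function [fourth] of them (the coordinate sums of a block are invariants that
   determine it), so the automorphisms are exactly the permutations commuting with [fourth].
   The translations (a, b) |-> (a + u, b + v) are automorphisms, so point transitivity
   amounts to an automorphism exchanging the two copies of F^r at 0.  If tau^-1 = A tau B,
   the linear exchange inl a |-> inr (B^-1 a), inr b |-> inl (A b) is one.  Conversely,
   let g be an automorphism with g (inl 0) = inr 0.  If g keeps some inl a on the left,
   then g conjugates the translation fourth (inl 0) (inl a) into fourth (inr 0) (inl c),
   which yields an automorphism mapping inl e to inr (tau e).  So we may assume that g maps
   every inl a to some inr (P a), hence every inr b to some inl (Q b).  The blocks inside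
   one copy make P additive, the mixed blocks make Q' := Q + Q 0 additive with
   tau^-1 (P y) = Q' (tau y), and P, Q' are invertible matrices over GF(2). *)

Section Char2Vectors.
Variables m n : nat.
Implicit Types u v : 'M['F_2]_(m, n).

Lemma addvv v : v + v = 0.
Proof. by apply/matrixP=> i j; rewrite !mxE addrr_pchar2 // pchar_Fp. Qed.

Lemma addvK u v : u + v + v = u.
Proof. by rewrite -addrA addvv addr0. Qed.

Lemma addKv u v : v + (v + u) = u.
Proof. by rewrite addrA addvv add0r. Qed.

Lemma addv_eq0 u v : (u + v == 0) = (u == v).
Proof. by apply/eqP/eqP => [uv|->]; [rewrite -(addvK u v) uv add0r | exact: addvv]. Qed.

Lemma addv_eql u v : (u == u + v) = (v == 0).
Proof. by rewrite -addv_eq0 addKv. Qed.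
End Char2Vectors.

Lemma uniq3E (T : eqType) (a b c : T) :
  uniq [:: a; b; c] = [&& a != b, a != c & b != c].
Proof. by rewrite /= !inE !negb_or andbT andbA. Qed.

Lemma uniq4E (T : eqType) (a b c d : T) :
  uniq [:: a; b; c; d] = [&& a != b, a != c, a != d, b != c, b != d & c != d].
Proof. by rewrite /= !inE !negb_or andbT !andbA. Qed.

Section FourSets.
Variable T : finType.
Implicit Types a b c d : T.

Lemma set4_12 a b c d : [set a; b; c; d] = [set b; a; c; d].
Proof. by apply/setP=> p; rewrite !inE; do ![case: eqP => ?]. Qed.

Lemma set4_23 a b c d : [set a; b; c; d] = [set a; c; b; d].
Proof. by apply/setP=> p; rewrite !inE; do ![case: eqP => ?]. Qed.

Lemma set4_34 a b c d : [set a; b; c; d] = [set a; b; d; c].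
Proof. by apply/setP=> p; rewrite !inE; do ![case: eqP => ?]. Qed.

Lemma imset_set4 (U : finType) (f : T -> U) a b c d :
  f @: [set a; b; c; d] = [set f a; f b; f c; f d].
Proof. by rewrite !imsetU !imset_set1. Qed.

Lemma big_set4 (R : Type) (idx : R) (op : Monoid.com_law idx) a b c d (F : T -> R) :
  uniq [:: a; b; c; d] ->
  \big[op/idx]_(p in [set a; b; c; d]) F p = op (F a) (op (F b) (op (F c) (F d))).
Proof.
rewrite uniq4E => /and5P[ab ac ad bc /andP[bd cd]].
have -> : [set a; b; c; d] = a |: (b |: (c |: [set d])).
  by apply/setP=> p; rewrite !inE !orbA.
rewrite big_setU1 ?inE ?negb_or ?ab ?ac ?ad // big_setU1 ?inE ?negb_or ?bc ?bd //.
by rewrite big_setU1 ?inE ?cd // big_set1.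
Qed.
End FourSets.

Lemma perm_closed_imset_mem (T : finType) (g : {perm T}) (S : {set {set T}}) :
  (forall Q : {set T}, Q \in S -> g @: Q \in S) ->
  forall Q : {set T}, (g @: Q \in S) = (Q \in S).
Proof.
move=> gS Q; have inj_g : injective (fun A : {set T} => g @: A).
  exact/imset_inj/perm_inj.
have gS_eq : [set g @: A | A : {set T} in S] = S.
  apply/eqP; rewrite eqEcard card_imset // leqnn andbT.
  by apply/subsetP=> _ /imsetP[A AS ->]; apply: gS.
by rewrite -{1}gS_eq; exact: mem_imset.
Qed.

Lemma perm_swap_sides (T : finType) (g : {perm T + T}) (P : T -> T) :
  (forall a, g (inl a) = inr (P a)) -> exists Q : T -> T, forall b, g (inr b) = inl (Q b).
Proof.
move=> gl; exists (fun b => if g (inr b) is inl c then c else b) => b.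
case E: (g (inr b)) => [//|b'].
have inj_P : injective P.
  by move=> x y Pxy; have /perm_inj[] : g (inl x) = g (inl y) by rewrite !gl Pxy.
have [Pi _ PiK] := injF_bij inj_P.
by have := gl (Pi b'); rewrite PiK -E => /perm_inj.
Qed.

Lemma F2_cases (c : 'F_2) : c = 0 \/ c = 1.
Proof. by case: c => [[|[|k]] hk]; [left|right|]; try apply/val_inj. Qed.

Section AdditiveMaps.
Variables r s : nat.

Lemma additive_of_sum3 (h : 'cV['F_2]_r -> 'cV['F_2]_s) : h 0 = 0 ->
    (forall x y z, uniq [:: x; y; z] -> h (x + y + z) = h x + h y + h z) ->
  forall x y, h (x + y) = h x + h y.
Proof.
move=> h0 h3 x y.
have [->|xy] := eqVneq x y; first by rewrite !addvv h0.
have [->|x0] := eqVneq x 0; first by rewrite h0 !add0r.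
have [->|y0] := eqVneq y 0; first by rewrite h0 !addr0.
by have := h3 x y 0; rewrite !addr0 h0 addr0; apply; rewrite uniq3E xy x0 y0.
Qed.

Lemma additive_mx (h : 'cV['F_2]_r -> 'cV['F_2]_s) :
  (forall x y, h (x + y) = h x + h y) -> exists M : 'M['F_2]_(s, r), forall x, h x = M *m x.
Proof.
move=> hD; have h0 : h 0 = 0 by apply/eqP; rewrite -(addv_eql (h 0)) -hD addr0.
have hZ c x : h (c *: x) = c *: h x by case: (F2_cases c) => ->; rewrite ?scale0r ?scale1r.
exists (\matrix_(i, j) h (delta_mx j 0) i 0) => x; apply/matrixP => i k.
rewrite (ord1 k) {1}[x]matrix_sum_delta (big_morph h hD h0) summxE !mxE.
by apply: eq_bigr => j _; rewrite big_ord1 hZ !mxE mulrC.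
Qed.
End AdditiveMaps.

Lemma additive_inj_unitmx r (h : 'cV['F_2]_r -> 'cV['F_2]_r) :
  (forall x y, h (x + y) = h x + h y) -> injective h ->
  exists2 M : 'M['F_2]_r, M \in unitmx & forall x, h x = M *m x.
Proof.
move=> hD inj_h; have [hV hK hVK] := injF_bij inj_h.
have hVD x y : hV (x + y) = hV x + hV y by apply: inj_h; rewrite hD !hVK.
have [[M hM] [MV hVM]] := (additive_mx hD, additive_mx hVD).
exists M => //; suff /mulmx1_unit[] : M *m MV = 1%:M by [].
apply/matrixP => i j; have := congr1 (fun v : 'cV['F_2]_r => v i 0) (hVK (delta_mx j 0)).
by rewrite hVM hM mulmxA -colE !mxE eqxx andbT => ->.
Qed.

Section FourthPoint.
Variables (r : nat) (tau : {perm vec r}).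
Hypothesis tau0 : tau 0 = 0.
Local Notation tauV := (tau^-1)%g.
Implicit Types (a b c d : vec r) (x y z w : point r).

Lemma tau_eq0 a : (tau a == 0) = (a == 0).
Proof. by rewrite -{1}tau0 (inj_eq perm_inj). Qed.

Lemma tauV0 : tauV 0 = 0.
Proof. by rewrite -{1}tau0 permK. Qed.

Lemma tauV_eq0 a : (tauV a == 0) = (a == 0).
Proof. by rewrite -{1}tauV0 (inj_eq perm_inj). Qed.

Definition fourth x y z : point r :=
  match x, y, z with
  | inl a, inl b, inl c => inl (a + b + c)
  | inr a, inr b, inr c => inr (a + b + c)
  | inl a, inl c, inr b | inl a, inr b, inl c | inr b, inl a, inl c => inr (b + tau (a + c))
  | inr b, inr d, inl a | inr b, inl a, inr d | inl a, inr b, inr d => inl (a + tauV (b + d))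
  end.

Definition lsum (Q : {set point r}) := \sum_(x in Q) if x is inl a then a else 0.
Definition rsum (Q : {set point r}) := \sum_(x in Q) if x is inr b then b else 0.
Definition lcount (Q : {set point r}) := (\sum_(x in Q) if x is inl _ then 1 else 0)%N.

Lemma uniq_inl4 a b c d :
  uniq [:: inl a; inl b; inl c; inl d : point r] = distinct4 a b c d.
Proof. by rewrite uniq4E !(inj_eq inl_inj). Qed.

Lemma uniq_inr4 a b c d :
  uniq [:: inr a; inr b; inr c; inr d : point r] = distinct4 a b c d.
Proof. by rewrite uniq4E !(inj_eq inr_inj). Qed.

Lemma SQS_block_sums Q : Q \in SQS tau ->
  [\/ lcount Q = 4 /\ lsum Q = 0, lcount Q = 0 /\ rsum Q = 0
     | lcount Q = 2 /\ tau (lsum Q) = rsum Q].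
Proof.
rewrite !in_setU /lcount /lsum /rsum => /orP[/orP[]|]; rewrite in_set.
- case/existsP=> a /existsP[b /existsP[c /existsP[d /and3P[D /eqP s /eqP->]]]].
  by constructor 1; rewrite !big_set4 ?uniq_inl4 //= !addrA.
- case/existsP=> a /existsP[b /existsP[c /existsP[d /and3P[D /eqP s /eqP->]]]].
  by constructor 2; rewrite !big_set4 ?uniq_inr4 //= !addrA.
- case/existsP=> a /existsP[b /existsP[c /existsP[d /and3P[/eqP e nz /eqP->]]]].
  have U : uniq [:: inl a; inl c; inr b; inr d : point r].
    rewrite uniq4E (inj_eq inl_inj) (inj_eq inr_inj).
    by rewrite -[a == c]addv_eq0 -tau_eq0 e nz -addv_eq0 nz.
  by constructor 3; rewrite !big_set4 //= !addr0 !add0r.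
Qed.

Lemma SQS_fourthE x y z w : uniq [:: x; y; z; w] -> [set x; y; z; w] \in SQS tau ->
  w = fourth x y z.
Proof.
move=> U /SQS_block_sums; rewrite /lcount /lsum /rsum !big_set4 //.
case: x U => a; case: y => b; case: z => c; case: w => d U /=; rewrite ?addr0 ?add0r;
  case=> -[n e] //; congr (_ _).
all: first [ by apply/eqP; rewrite -addv_eq0 addrC -!addrA e
           | by rewrite e addKv | by rewrite -e permK addKv ].
Qed.

Lemma Q0_in_SQS a b c d : distinct4 a b c d -> a + b + c + d = 0 ->
  [set inl a; inl b; inl c; inl d] \in SQS tau.
Proof.
move=> D s; rewrite !in_setU; apply/orP; left; apply/orP; left; rewrite in_set.
by apply/existsP; exists a; apply/existsP; exists b; apply/existsP; exists c;
  apply/existsP; exists d; rewrite D s !eqxx.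
Qed.

Lemma Q1_in_SQS a b c d : distinct4 a b c d -> a + b + c + d = 0 ->
  [set inr a; inr b; inr c; inr d] \in SQS tau.
Proof.
move=> D s; rewrite !in_setU; apply/orP; left; apply/orP; right; rewrite in_set.
by apply/existsP; exists a; apply/existsP; exists b; apply/existsP; exists c;
  apply/existsP; exists d; rewrite D s !eqxx.
Qed.

Lemma Qtau_in_SQS a c b d : tau (a + c) = b + d -> a != c ->
  [set inl a; inl c; inr b; inr d] \in SQS tau.
Proof.
move=> e ac; rewrite !in_setU; apply/orP; right; rewrite in_set.
apply/existsP; exists a; apply/existsP; exists b; apply/existsP; exists c.
by apply/existsP; exists d; rewrite e -e tau_eq0 addv_eq0 ac !eqxx.
Qed.

Lemma SQS_fourth x y z : uniq [:: x; y; z] ->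
  uniq [:: x; y; z; fourth x y z] /\ [set x; y; z; fourth x y z] \in SQS tau.
Proof.
have sum3_eq a b c : [/\ (a == a + b + c) = (b == c), (b == a + b + c) = (a == c)
                       & (c == a + b + c) = (a == b)].
  by split; [rewrite -addrA | rewrite (addrC a) -addrA | rewrite (addrC _ c)];
    rewrite addv_eql addv_eq0.
have mixed_l a b c : a != b -> [set inl a; inl b; inr c; inr (c + tau (a + b))] \in SQS tau.
  exact: Qtau_in_SQS (esym (addKv _ _)).
have mixed_r a b c : b != c -> [set inl a; inl (a + tauV (b + c)); inr b; inr c] \in SQS tau.
  by move=> bc; apply: Qtau_in_SQS; rewrite ?addKv ?permKV // addv_eql tauV_eq0 addv_eq0.
rewrite uniq4E uniq3E.
case: x => a; case: y => b; case: z => c.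
all: rewrite /fourth ?(inj_eq inl_inj) ?(inj_eq inr_inj) /= ?andbT.
- case/and3P=> ab ac bc; have D : distinct4 a b c (a + b + c).
    by rewrite /distinct4; have [-> -> ->] := sum3_eq a b c; rewrite ab ac bc.
  by split; [exact: D | exact: Q0_in_SQS D (addvv _)].
- move=> ab; rewrite addv_eql tau_eq0 addv_eq0 ab; split=> //.
  exact: mixed_l.
- move=> ac; rewrite addv_eql tau_eq0 addv_eq0 ac; split=> //.
  by rewrite set4_23; apply: mixed_l.
- move=> bc; rewrite addv_eql tauV_eq0 addv_eq0 bc; split=> //.
  by rewrite set4_34 set4_23; apply: mixed_r.
- move=> bc; rewrite addv_eql tau_eq0 addv_eq0 bc; split=> //.
  by rewrite set4_12 set4_23; apply: mixed_l.
- move=> ac; rewrite addv_eql tauV_eq0 addv_eq0 ac; split=> //.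
  by rewrite set4_12 set4_34 set4_23; apply: mixed_r.
- move=> ab; rewrite addv_eql tauV_eq0 addv_eq0 ab; split=> //.
  by rewrite set4_23 set4_12 set4_34 set4_23; apply: mixed_r.
- case/and3P=> ab ac bc; have D : distinct4 a b c (a + b + c).
    by rewrite /distinct4; have [-> -> ->] := sum3_eq a b c; rewrite ab ac bc.
  by split; [exact: D | exact: Q1_in_SQS D (addvv _)].
Qed.

Lemma SQS_blockP Q : Q \in SQS tau ->
  exists x y z, uniq [:: x; y; z] /\ Q = [set x; y; z; fourth x y z].
Proof.
rewrite !in_setU => /orP[/orP[]|]; rewrite in_set.
- case/existsP=> a /existsP[b /existsP[c /existsP[d /and3P[D /eqP s /eqP->]]]].
  case/and5P: D => ab ac _ bc _; exists (inl a), (inl b), (inl c).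
  have -> : d = a + b + c by apply/eqP; rewrite eq_sym -addv_eq0 s.
  by rewrite uniq3E !(inj_eq inl_inj) ab ac bc.
- case/existsP=> a /existsP[b /existsP[c /existsP[d /and3P[D /eqP s /eqP->]]]].
  case/and5P: D => ab ac _ bc _; exists (inr a), (inr b), (inr c).
  have -> : d = a + b + c by apply/eqP; rewrite eq_sym -addv_eq0 s.
  by rewrite uniq3E !(inj_eq inr_inj) ab ac bc.
- case/existsP=> a /existsP[b /existsP[c /existsP[d /and3P[/eqP e bd /eqP->]]]].
  exists (inl a), (inl c), (inr b); rewrite /fourth e addKv uniq3E (inj_eq inl_inj).
  by rewrite -addv_eq0 -tau_eq0 e bd.
Qed.

Definition preserves_fourth (g : point r -> point r) :=
  forall x y z, uniq [:: x; y; z] -> g (fourth x y z) = fourth (g x) (g y) (g z).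

Lemma automorphismP (g : {perm point r}) : is_automorphism tau g <-> preserves_fourth g.
Proof.
have uniq_g s : uniq (map g s) = uniq s := map_inj_uniq perm_inj s.
split=> [aut_g x y z U | pres_g].
  have [U4 S] := SQS_fourth U; rewrite -aut_g imset_set4 in S.
  by apply: SQS_fourthE S; rewrite -[uniq _]/(uniq (map g [:: x; y; z; _])) uniq_g.
apply: perm_closed_imset_mem => Q /SQS_blockP[x [y [z [U ->]]]].
have Ug : uniq [:: g x; g y; g z] by rewrite -[uniq _]/(uniq (map g [:: x; y; z])) uniq_g.
by rewrite imset_set4 pres_g //; case: (SQS_fourth Ug).
Qed.

Lemma automorphismM (g h : {perm point r}) :
  is_automorphism tau g -> is_automorphism tau h -> is_automorphism tau (g * h)%g.
Proof.
move=> aut_g aut_h Q; rewrite -(aut_g Q) -(aut_h (g @: Q)) -imset_comp.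
by rewrite (eq_imset _ (permM g h)).
Qed.

Lemma automorphismV (g : {perm point r}) :
  is_automorphism tau g -> is_automorphism tau (g^-1)%g.
Proof.
move=> aut_g Q; rewrite -(aut_g ((g^-1)%g @: Q)) -imset_comp.
by rewrite (eq_imset _ (@permKV _ g)) imset_id.
Qed.
End FourthPoint.

Section Automorphisms.
Variables (r : nat) (tau : {perm vec r}).
Hypothesis tau0 : tau 0 = 0.
Local Notation tauV := (tau^-1)%g.

Definition shift_fun (u v : vec r) (x : point r) : point r :=
  match x with inl a => inl (a + u) | inr b => inr (b + v) end.

Lemma shift_fun_inj u v : injective (shift_fun u v).
Proof. by apply: (can_inj (g := shift_fun u v)) => -[a|b]; rewrite /= addvK. Qed.

Definition shift u v : {perm point r} := perm (@shift_fun_inj u v).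

Lemma shiftE u v : shift u v =1 shift_fun u v.
Proof. exact: permE. Qed.

Lemma automorphism_shift u v : is_automorphism tau (shift u v).
Proof.
apply/(automorphismP tau0) => x y z _; rewrite !shiftE.
have addvKD (a c w : vec r) : a + w + (c + w) = a + c by rewrite addrACA addvv addr0.
case: x => a; case: y => b; case: z => c; rewrite /= ?addvKD; congr (_ _).
all: first [exact: addrAC | exact: (esym (addrA _ _ _))].
Qed.

Definition swap_fun (A B : 'M['F_2]_r) (x : point r) : point r :=
  match x with inl a => inr (A *m a) | inr b => inl (B *m b) end.

Lemma preserves_swap A B : (forall b, tau (B *m tau b) = A *m b) ->
  preserves_fourth tau (swap_fun A B).
Proof.
move=> tauBtau x y z _.
have tauV_A b : tauV (A *m b) = B *m tau b by rewrite -tauBtau permK.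
have A_tauV e : A *m tauV e = tau (B *m e) by rewrite -tauBtau permKV.
case: x => a; case: y => b; case: z => c; rewrite /= !mulmxDr //.
all: by congr (_ _); congr (_ + _); rewrite -mulmxDr ?tauV_A ?A_tauV.
Qed.

Lemma point_transitive_of_double_coset A B : A \in unitmx -> B \in unitmx ->
  (forall x : vec r, tauV x = A *m tau (B *m x)) -> point_transitive tau.
Proof.
move=> uA uB tauV_AB.
have swap_inj : injective (swap_fun (invmx B) A).
  move=> [a|b] [a'|b'] //= [] => [/(can_inj (mulKVmx uB))|/(can_inj (mulKmx uA))] -> //.
have [s aut_s s0] : exists2 s, is_automorphism tau s & s (inr 0) = inl 0.
  exists (perm swap_inj); last by rewrite permE /= mulmx0.
  apply/(automorphismP tau0) => x y z; rewrite !permE; apply: preserves_swap => b.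
  by rewrite -[in RHS](permKV tau (invmx B *m b)) tauV_AB mulKVmx.
have to_origin x : exists2 g, is_automorphism tau g & g x = inl 0.
  case: x => [a|b].
    by exists (shift a 0); [exact: automorphism_shift | rewrite shiftE /= addvv].
  exists (shift 0 b * s)%g; first exact/automorphismM/aut_s/automorphism_shift.
  by rewrite permM shiftE /= addvv.
move=> x y; have [[gx aut_gx gx0] [gy aut_gy gy0]] := (to_origin x, to_origin y).
exists (gx * gy^-1)%g; split; first exact/automorphismM/automorphismV.
by rewrite permM gx0 -gy0 permK.
Qed.

Lemma conjugate_shift_swaps_sides g (a c : vec r) :
    is_automorphism tau g -> g (inl 0) = inr 0 -> g (inl a) = inl c ->
  forall e : vec r, (shift c 0 * g^-1 * shift a (tau a) * g)%g (inl e) = inr (tau e).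
Proof.
move=> aut_g g0 ga e; have pres_g := (automorphismP tau0 g).1 aut_g.
rewrite !permM !shiftE /=; have [->|e0] := eqVneq e 0.
  by rewrite add0r -ga permK /= addvv g0 tau0.
set w := (g^-1)%g (inl (e + c)); have gw : g w = inl (e + c) by rewrite permKV.
have -> : shift_fun a (tau a) w = fourth tau (inl 0) (inl a) w.
  by case: w {gw} => [x|y] /=; rewrite add0r // addrC.
have U : uniq [:: inl 0; inl a; w].
  rewrite uniq3E; apply/and3P; split; apply/negP => /eqP E; move: (congr1 g E).
  - by rewrite g0 ga.
  - by rewrite g0 gw.
  - by rewrite ga gw => -[] /eqP; rewrite addrC addv_eql (negbTE e0).
by rewrite pres_g // g0 ga gw /= add0r addrC addvK.
Qed.

Lemma exists_side_swap : point_transitive tau ->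
  exists g (P : vec r -> vec r),
    [/\ is_automorphism tau g, P 0 = 0 & forall a : vec r, g (inl a) = inr (P a)].
Proof.
move=> pt; have [g [aut_g g0]] := pt (inl 0) (inr 0).
case: (pickP (fun a => if g (inl a) is inl _ then true else false)) => [a | g_swaps].
  case ga: (g (inl a)) => [c|//] _.
  exists (shift c 0 * g^-1 * shift a (tau a) * g)%g, tau; split=> //.
    by do !apply: automorphismM; try exact: automorphism_shift; try apply: automorphismV.
  exact: conjugate_shift_swaps_sides.
exists g, (fun a => if g (inl a) is inr b then b else 0); split; rewrite ?g0 // => a.
by move: (g_swaps a); case: (g (inl a)).
Qed.

Section SideSwap.
Variables (g : {perm point r}) (P Q : vec r -> vec r).
Hypotheses (aut_g : is_automorphism tau g) (P0 : P 0 = 0).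
Hypothesis gl : forall a : vec r, g (inl a) = inr (P a).
Hypothesis gr : forall b : vec r, g (inr b) = inl (Q b).

Let pres_g : preserves_fourth tau g := (automorphismP tau0 g).1 aut_g.

Lemma side_swap_inj : injective P /\ injective Q.
Proof.
by split=> x y e; [have := gl x | have := gr x]; rewrite e -?gl -?gr => /perm_inj[].
Qed.

Lemma side_swap_additive a b : P (a + b) = P a + P b.
Proof.
apply: additive_of_sum3 P0 _ a b => x y z U.
have := @pres_g (inl x) (inl y) (inl z).
rewrite (map_inj_uniq inl_inj [:: x; y; z]) U.
by rewrite !gl => /(_ isT)[].
Qed.

Lemma side_swap_shift b y : y != 0 -> Q (b + tau y) = Q b + tauV (P y).
Proof.
move=> y0; have := @pres_g (inl y) (inl 0) (inr b).
rewrite uniq3E (inj_eq inl_inj) y0 /= => /(_ isT).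
by rewrite !gr !gl P0 /= !addr0 => -[].
Qed.

Lemma tauV_side_swap y : tauV (P y) = Q (tau y) + Q 0.
Proof.
have [->|y0] := eqVneq y 0; first by rewrite P0 (tauV0 tau0) tau0 addvv.
by rewrite -[tau y]add0r side_swap_shift // addrAC addvv add0r.
Qed.

Lemma side_swap_affine b e : Q (b + e) + Q 0 = (Q b + Q 0) + (Q e + Q 0).
Proof.
have [->|e0] := eqVneq e 0; first by rewrite addr0 addvv addr0.
rewrite -[e](permKV tau) -tauV_side_swap side_swap_shift ?(tauV_eq0 tau0) //.
by rewrite addrAC.
Qed.

Lemma side_swap_double_coset :
  exists A B : 'M['F_2]_r,
    [/\ A \in unitmx, B \in unitmx & forall x : vec r, tauV x = A *m tau (B *m x)].
Proof.
have [P_inj Q_inj] := side_swap_inj.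
have [MP uMP MPE] := additive_inj_unitmx side_swap_additive P_inj.
have Q'_inj : injective (fun b => Q b + Q 0) by move=> x y /addIr/Q_inj.
have [A uA AE] := additive_inj_unitmx side_swap_affine Q'_inj.
exists A, (invmx MP); split; rewrite ?unitmx_inv // => x.
by rewrite -AE -tauV_side_swap MPE mulKVmx.
Qed.
End SideSwap.
End Automorphisms.

Unset Implicit Arguments.

Theorem corollary1 (r : nat) (hr : (0 < r)%N) (tau : {perm vec r})
    (htau0 : tau 0 = 0) :
  point_transitive tau <->
  exists A B : 'M['F_2]_r,
    [/\ A \in unitmx, B \in unitmx &
        forall x : vec r, (tau^-1)%g x = A *m tau (B *m x)].
Proof.
split=> [/(exists_side_swap htau0)[g [P [aut_g P0 gl]]] | [A [B [uA uB tauV_AB]]]].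
  have [Q gr] := perm_swap_sides gl.
  exact: (side_swap_double_coset htau0 aut_g P0 gl gr).
exact: (point_transitive_of_double_coset htau0 uA uB tauV_AB).
Qed.
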